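(* Let $K$ be a commutative ring with identity, let $G$ be a group and $n\ge 0$. If $G$ is of type $FP_n$ over $K$ (i.e. left-$FP_n$), then $G$ is bi-$FP_n$ over $K$.
   Context: $KG$ is the group ring, with augmentation $\varepsilon:KG\to K$, $g\mapsto 1$. A module is of type $FP_n$ if there is an exact sequence $0\leftarrow M\leftarrow P_0\leftarrow\cdots\leftarrow P_n$ with $P_0,\dots,P_n$ finitely generated free modules. $G$ is of type $FP_n$ over $K$ if $K$, regarded as a left $KG$-module via $\varepsilon$, is of type $FP_n$ (for groups left and right versions coincide). A $(KG,KG)$-bimodule is an abelian group with commuting left and right $KG$-actions with $km=mk$ for $k\in K$; the free bimodule of rank $1$ is $KG\otimes_K KG$ with $a(u\otimes v)b=au\otimes vb$, and a free bimodule of rank $r$ is a direct sum of $r$ copies of it. $G$ is bi-$FP_n$ if $KG$, regarded as a $(KG,KG)$-bimodule by left and right multiplication, admits an exact sequence $0\leftarrow KG\leftarrow F_0\leftarrow\cdots\leftarrow F_n$ with $F_0,\dots,F_n$ finitely generated free $(KG,KG)$-bimodules. *)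

From HB Require Import structures.
From mathcomp Require Import all_boot all_order all_algebra.
From mathcomp Require Import finmap.

Set Implicit Arguments.
Unset Strict Implicit.
Unset Printing Implicit Defensive.

Import GRing.Theory.
Local Open Scope fset_scope.
Local Open Scope ring_scope.

Section GroupRing.
Variables (K : comPzRingType) (G : groupType).

(* The group ring KG: finitely supported functions G -> K, i.e.           *)
(* formal finite K-linear combinations  sum_g a(g) g.                      *)
Definition KG := {fsfun G -> K with 0}.

Definition kg_zero : KG := [fsfun x in fset0 => (0 : K) | 0].
Definition kg_one : KG := [fsfun x in [fset (1%g : G)] => (1 : K) | 0].
Definition kg_add (a b : KG) : KG :=
  [fsfun x in finsupp a `|` finsupp b => a x + b x | 0].
Definition kg_mul (a b : KG) : KG :=
  [fsfun g in [fset (x * y)%g | x in finsupp a, y in finsupp b] =>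
     \sum_(x <- finsupp a) a x * b (x^-1 * g)%g | 0].
Definition augm (a : KG) : K := \sum_(g <- finsupp a) a g.

(* KG (x)_K KG, identified with K[G x G] via  g (x) h  <-> (g, h).        *)
Definition KG2 := {fsfun (G * G)%type -> K with 0}.

Definition kg2_zero : KG2 := [fsfun x in fset0 => (0 : K) | 0].
Definition kg2_add (u v : KG2) : KG2 :=
  [fsfun x in finsupp u `|` finsupp v => u x + v x | 0].
(* bimodule structure  a (g (x) h) b = a g (x) h b, extended bilinearly  *)
Definition kg2_bact (a : KG) (u : KG2) (b : KG) : KG2 :=
  [fsfun p in [fset ((x * q.1.1)%g, (q.1.2 * q.2)%g) |
                  x in finsupp a, q in finsupp u `*` finsupp b] =>
     \sum_(x <- finsupp a) \sum_(y <- finsupp b)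
        a x * u ((x^-1 * p.1)%g, (p.2 * y^-1)%g) * b y | 0].

Record lmod := LMod {
  lcar :> Type;
  lzero : lcar;
  ladd : lcar -> lcar -> lcar;
  lact : KG -> lcar -> lcar }.

Definition lhom (M N : lmod) (f : M -> N) : Prop :=
  (forall x y, f (ladd x y) = ladd (f x) (f y)) /\
  (forall a x, f (lact a x) = lact a (f x)).

Definition freeL (r : nat) : lmod :=
  @LMod ('I_r -> KG) (fun _ => kg_zero)
        (fun u v i => kg_add (u i) (v i)) (fun a u i => kg_mul a (u i)).

Definition trivK : lmod :=
  @LMod K 0 (fun x y => x + y) (fun a k => augm a * k).

Record bimod := BiMod {
  bcar :> Type;
  bzero : bcar;
  badd : bcar -> bcar -> bcar;
  bact : KG -> bcar -> KG -> bcar }.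

Definition bhom (M N : bimod) (f : M -> N) : Prop :=
  (forall x y, f (badd x y) = badd (f x) (f y)) /\
  (forall a x b, f (bact a x b) = bact a (f x) b).

Definition freeB (r : nat) : bimod :=
  @BiMod ('I_r -> KG2) (fun _ => kg2_zero)
         (fun u v i => kg2_add (u i) (v i)) (fun a u b i => kg2_bact a (u i) b).

Definition regB : bimod :=
  @BiMod KG kg_zero kg_add (fun a m b => kg_mul (kg_mul a m) b).

(* A left module M is of type FP_n: there is an exact sequence            *)
(*   0 <- M <-e- P_0 <-d_0- P_1 <-d_1- ... <-d_(n-1)- P_n                *)
(* with P_i = KG^(r i) finitely generated free (exact at M, P_0, ...,     *)
(* P_(n-1); the maps d_i for i >= n are irrelevant).                     *)
Definition lFP (n : nat) (M : lmod) : Prop :=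
  exists (r : nat -> nat) (e : freeL (r 0%N) -> M)
         (d : forall i : nat, freeL (r i.+1) -> freeL (r i)),
    [/\ lhom e,
        (forall i, lhom (d i)),
        (forall m : M, exists x, e x = m),
        ((0 < n)%N -> forall x, e x = lzero M <-> exists y, d 0%N y = x) &
        (forall i : nat, (i.+1 < n)%N ->
           forall x, d i x = lzero (freeL (r i)) <->
                     exists y, d i.+1 y = x)].

Definition bFP (n : nat) (M : bimod) : Prop :=
  exists (r : nat -> nat) (e : freeB (r 0%N) -> M)
         (d : forall i : nat, freeB (r i.+1) -> freeB (r i)),
    [/\ bhom e,
        (forall i, bhom (d i)),
        (forall m : M, exists x, e x = m),
        ((0 < n)%N -> forall x, e x = bzero M <-> exists y, d 0%N y = x) &
        (forall i : nat, (i.+1 < n)%N ->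
           forall x, d i x = bzero (freeB (r i)) <->
                     exists y, d i.+1 y = x)].

Definition group_FP (n : nat) : Prop := lFP n trivK.
Definition group_biFP (n : nat) : Prop := bFP n regB.

End GroupRing.

From HB Require Import structures.
From mathcomp Require Import all_boot all_order all_algebra.
From mathcomp Require Import finmap.
From Stdlib Require Import FunctionalExtensionality ClassicalEpsilon.

(* Identify KG (x)_K KG with K[G x G] and cut an element [w] along the
   cosets of the diagonal: its [c]-th slice is [y |-> w (c y, y^-1)] in KG,
   and [w] is the finitely supported family of its slices.  The [c]-th
   slice of [a w b] is the sum, over [u] in the support of [a] and [v] in
   that of [b], of [a u * b v] times [v^-1] times the [(u^-1 c v^-1)]-th
   slice of [w].  So a left KG-linear map of free modules applied slice by
   slice is a bimodule map of free bimodules of the same ranks, and the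
   augmentation applied slice by slice is a bimodule map onto KG (the
   [c]-th coefficient being the augmentation of the [c]-th slice).
   Exactness can be tested slice by slice, so these maps turn a partial
   free resolution of K into one of KG: this is induction from the
   diagonal subgroup of G x G. *)

Set Implicit Arguments.
Unset Strict Implicit.
Unset Printing Implicit Defensive.
Import GRing.Theory.
Local Open Scope fset_scope.
Local Open Scope ring_scope.

Section BiFP.
Variables (K : comPzRingType) (G : groupType).
Local Notation KG := (KG K G).
Local Notation KG2 := (KG2 K G).
Local Notation V := (freeL K G).
Local Notation W := (freeB K G).

Lemma fsfun_inE (T : choiceType) (S : {fset T}) (h : T -> K) x :
  (x \notin S -> h x = 0) ->
  ([fsfun a in S => h a | 0] : {fsfun T -> K with 0}) x = h x.
Proof. by rewrite fsfun_fun; case: ifP => // _ ->. Qed.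

Lemma big_finsupp_widen (T : choiceType) (f : {fsfun T -> K with 0})
    (S : {fset T}) (F : T -> K) :
  finsupp f `<=` S -> (forall x, f x = 0 -> F x = 0) ->
  \sum_(x <- finsupp f) F x = \sum_(x <- S) F x.
Proof.
move=> fS F0; apply: big_fset_incl => // x _.
by rewrite memNfinsupp => /eqP/F0.
Qed.

Lemma kg_zeroE g : kg_zero K G g = 0.
Proof. by rewrite fsfun_fun. Qed.

Lemma kg2_zeroE p : kg2_zero K G p = 0.
Proof. by rewrite fsfun_fun. Qed.

Lemma kg_addE (a b : KG) g : kg_add a b g = a g + b g.
Proof.
by rewrite fsfun_inE // inE negb_or !memNfinsupp => /andP[/eqP-> /eqP->]; rewrite addr0.
Qed.

Lemma kg2_addE (u v : KG2) p : kg2_add u v p = u p + v p.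
Proof.
by rewrite fsfun_inE // inE negb_or !memNfinsupp => /andP[/eqP-> /eqP->]; rewrite addr0.
Qed.

Lemma kg_mulE (a b : KG) g :
  kg_mul a b g = \sum_(x <- finsupp a) a x * b (x^-1 * g)%g.
Proof.
rewrite fsfun_inE // => gN; rewrite big1_seq // => x /= xa.
have [/eqP->|bx] := boolP (b (x^-1 * g)%g == 0); first by rewrite mulr0.
case/negP: gN; apply/imfset2P; exists x => //; exists (x^-1 * g)%g.
  by rewrite mem_finsupp.
by rewrite mulVKg.
Qed.

Lemma kg_mulEr (a b : KG) g :
  kg_mul a b g = \sum_(y <- finsupp b) a (g * y^-1)%g * b y.
Proof.
rewrite kg_mulE.
set A := finsupp a `|` [fset (g * y^-1)%g | y in finsupp b].
rewrite (@big_finsupp_widen _ a A); last 2 first.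
- exact: fsubsetUl.
- by move=> x ->; rewrite mul0r.
have inj : {in A &, injective (fun x => (x^-1 * g)%g)}.
  by move=> x y _ _ /(mulIg g)/invg_inj.
rewrite (@big_finsupp_widen _ b [fset (x^-1 * g)%g | x in A]); last 2 first.
- apply/fsubsetP => y yb; apply/imfsetP; exists (g * y^-1)%g.
    by rewrite inE; apply/orP; right; apply/imfsetP; exists y.
  by rewrite invgM invgK mulgVK.
- by move=> x ->; rewrite mulr0.
rewrite [RHS]big_imfset //=.
by apply: eq_bigr => x _; rewrite invgM invgK mulVKg.
Qed.

Lemma kg2_bactE (a : KG) (u : KG2) (b : KG) p :
  kg2_bact a u b p = \sum_(x <- finsupp a) \sum_(y <- finsupp b)
        a x * u ((x^-1 * p.1)%g, (p.2 * y^-1)%g) * b y.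
Proof.
rewrite fsfun_inE // => pN; rewrite big1_seq // => x /= xa.
rewrite big1_seq // => y /= yb.
have [/eqP->|uxy] := boolP (u ((x^-1 * p.1)%g, (p.2 * y^-1)%g) == 0).
  by rewrite mulr0 mul0r.
case/negP: pN; apply/imfset2P; exists x => //.
exists (((x^-1 * p.1)%g, (p.2 * y^-1)%g), y).
  by rewrite in_fsetM /= mem_finsupp uxy.
by rewrite /= mulVKg mulgVK -surjective_pairing.
Qed.

Definition kg_mono (l : K) (g : G) : KG := [fsfun x in [fset g] => l | 0].

Lemma finsupp_kg_mono l g : finsupp (kg_mono l g) `<=` [fset g].
Proof.
by apply/fsubsetP => x; rewrite mem_finsupp fsfun_fun; case: ifP; rewrite ?eqxx.
Qed.

Lemma kg_monoE l g : kg_mono l g g = l.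
Proof. by rewrite fsfun_fun inE eqxx. Qed.

Lemma kg_mono_mulE l g (f : KG) y : kg_mul (kg_mono l g) f y = l * f (g^-1 * y)%g.
Proof.
rewrite kg_mulE (big_finsupp_widen (finsupp_kg_mono l g)); last first.
  by move=> x ->; rewrite mul0r.
by rewrite big_seq_fset1 kg_monoE.
Qed.

Lemma augm_kg_mono l g : augm (kg_mono l g) = l.
Proof.
by rewrite /augm (big_finsupp_widen (finsupp_kg_mono l g)) // big_seq_fset1 kg_monoE.
Qed.

Section Slices.
Variable r : nat.

Definition slice (w : W r) (c : G) : V r := fun k =>
  [fsfun y in [fset (q.2)^-1%g | q in finsupp (w k)] => w k ((c * y)%g, y^-1%g) | 0].

Lemma sliceE w c k y : slice w c k y = w k ((c * y)%g, y^-1%g).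
Proof.
rewrite fsfun_inE // => yN; apply/eqP; rewrite -memNfinsupp.
apply: contra yN => wy; apply/imfsetP; exists ((c * y)%g, y^-1%g) => //=.
by rewrite invgK.
Qed.

Lemma slice_inj w w' : (forall c, slice w c = slice w' c) -> w = w'.
Proof.
move=> ww'; apply: functional_extensionality => k; apply/fsfunP => q.
have := congr1 (fun v : V r => v k (q.2^-1)%g) (ww' (q.1 * q.2)%g).
by rewrite !sliceE mulgK invgK -surjective_pairing.
Qed.

Definition unslice (C : seq G) (p : G -> V r) : W r := fun k =>
  [fsfun q in \bigcup_(c <- C) [fset ((c * z)%g, z^-1%g) | z in finsupp (p c k)] =>
     if (q.1 * q.2)%g \in C then p (q.1 * q.2)%g k (q.2^-1)%g else 0 | 0].

Lemma unsliceE C p k q : unslice C p k q =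
  if (q.1 * q.2)%g \in C then p (q.1 * q.2)%g k (q.2^-1)%g else 0.
Proof.
rewrite fsfun_inE // => qN; case: ifP => // qC.
apply/eqP; rewrite -memNfinsupp.
apply: contra qN => pq; apply/bigfcupP; exists (q.1 * q.2)%g; first by rewrite qC.
apply/imfsetP; exists (q.2^-1)%g => //=.
by rewrite invgK mulgK -surjective_pairing.
Qed.

Lemma slice_unslice C p c :
  slice (unslice C p) c = if c \in C then p c else lzero (V r).
Proof.
apply: functional_extensionality => k; apply/fsfunP => y.
by rewrite sliceE unsliceE /= mulgK invgK; case: ifP; rewrite ?kg_zeroE.
Qed.

Definition slice_dom (w : W r) : seq G :=
  flatten [seq [seq (q.1 * q.2)%g | q <- finsupp (w k)] | k <- enum 'I_r].

Lemma slice_notin_dom w c : c \notin slice_dom w -> slice w c = lzero (V r).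
Proof.
move=> cN; apply: functional_extensionality => k; apply/fsfunP => y.
rewrite sliceE kg_zeroE; apply/eqP; rewrite -memNfinsupp.
apply: contra cN => wy; apply/flattenP.
exists [seq (q.1 * q.2)%g | q <- finsupp (w k)].
  by apply/mapP; exists k; rewrite ?mem_enum.
by apply/mapP; exists ((c * y)%g, y^-1%g) => //=; rewrite mulgK.
Qed.

Lemma slice0 c : slice (bzero (W r)) c = lzero (V r).
Proof.
apply: functional_extensionality => k; apply/fsfunP => y.
by rewrite sliceE /= kg2_zeroE kg_zeroE.
Qed.

Lemma sliceD w w' c : slice (badd w w') c = ladd (slice w c) (slice w' c).
Proof.
apply: functional_extensionality => k; apply/fsfunP => y.
by rewrite sliceE /= kg_addE !sliceE kg2_addE.
Qed.

End Slices.

Lemma lhom0 (M N : lmod K G) (f : M -> N) :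
  lhom f -> ladd (lzero M) (lzero M) = lzero M ->
  (forall y : N, ladd y y = y -> y = lzero N) -> f (lzero M) = lzero N.
Proof. by move=> [fD _] M00 Nidem; apply: Nidem; rewrite -fD M00. Qed.

Lemma addrr_eq0 (x : K) : x + x = x -> x = 0.
Proof. by rewrite -{3}[x]addr0 => /addrI. Qed.

Lemma freeL_add00 r : ladd (lzero (V r)) (lzero (V r)) = lzero (V r).
Proof.
apply: functional_extensionality => k; apply/fsfunP => y.
by rewrite /= kg_addE kg_zeroE addr0.
Qed.

Lemma lhom0_freeL r1 r2 (d : V r1 -> V r2) : lhom d -> d (lzero _) = lzero _.
Proof.
move/lhom0; apply; first exact: freeL_add00.
move=> v vv; apply: functional_extensionality => k; apply/fsfunP => y.
have := congr1 (fun v : V r2 => v k y) vv.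
by rewrite /= kg_addE kg_zeroE => /addrr_eq0.
Qed.

Lemma lhom0_trivK r (e : V r -> trivK K G) : lhom e -> e (lzero _) = 0.
Proof. by move/lhom0; apply; [exact: freeL_add00 | exact: addrr_eq0]. Qed.

Definition lsum (M : lmod K G) (T : Type) (s : seq T) (F : T -> M) : M :=
  \big[@ladd _ _ M/lzero M]_(i <- s) F i.

Lemma lsum_freeLE r T (s : seq T) (F : T -> V r) k y :
  lsum s F k y = \sum_(i <- s) F i k y.
Proof.
elim: s => [|i s IH]; first by rewrite /lsum !big_nil /= kg_zeroE.
by rewrite /lsum in IH *; rewrite big_cons /= kg_addE IH big_cons.
Qed.

Lemma lsum_trivKE T (s : seq T) (F : T -> trivK K G) : lsum s F = \sum_(i <- s) F i.
Proof. by []. Qed.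

Lemma lhom_lsum (M N : lmod K G) (f : M -> N) T (s : seq T) (F : T -> M) :
  lhom f -> f (lzero M) = lzero N -> f (lsum s F) = lsum s (fun i => f (F i)).
Proof.
move=> [fD _] f0; elim: s => [|i s IH]; first by rewrite /lsum !big_nil.
by rewrite /lsum in IH *; rewrite !big_cons fD IH.
Qed.

Lemma slice_bact r (a : KG) (w : W r) (b : KG) c :
  slice (bact a w b) c =
  lsum (finsupp a) (fun u => lsum (finsupp b) (fun v =>
     lact (kg_mono (a u * b v) v^-1%g) (slice w (u^-1 * c * v^-1)%g))).
Proof.
apply: functional_extensionality => k; apply/fsfunP => y.
rewrite sliceE kg2_bactE lsum_freeLE; apply: eq_bigr => u _.
rewrite lsum_freeLE; apply: eq_bigr => v _.
rewrite /= kg_mono_mulE sliceE invgK /=.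
have -> : (u^-1 * c * v^-1 * (v * y))%g = (u^-1 * (c * y))%g.
  by rewrite !mulgA mulgVK.
by rewrite invgM mulrAC.
Qed.

Section SlicedMap.
Variables (r1 r2 : nat) (d : V r1 -> V r2).
Hypothesis d_hom : lhom d.

Definition sliced (w : W r1) : W r2 := unslice (slice_dom w) (fun c => d (slice w c)).

Lemma slice_sliced w c : slice (sliced w) c = d (slice w c).
Proof.
rewrite slice_unslice; case: ifP => // /negbT cN.
by rewrite slice_notin_dom // lhom0_freeL.
Qed.

Lemma sliced_bhom : bhom sliced.
Proof.
split=> [x y | a x b]; apply: slice_inj => c.
  by rewrite sliceD !slice_sliced sliceD d_hom.1.
have d_lsum := lhom_lsum _ _ d_hom (lhom0_freeL d_hom).
rewrite slice_bact slice_sliced slice_bact d_lsum.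
congr lsum; apply: functional_extensionality => u.
rewrite d_lsum; congr lsum; apply: functional_extensionality => v.
by rewrite d_hom.2 slice_sliced.
Qed.

Lemma sliced_onto w : (forall c, exists x, d x = slice w c) -> exists x, sliced x = w.
Proof.
case/choice=> p pP; exists (unslice (slice_dom w) p); apply: slice_inj => c.
rewrite slice_sliced slice_unslice; case: ifP => [_|/negbT cN]; first exact: pP.
by rewrite lhom0_freeL // slice_notin_dom.
Qed.

End SlicedMap.

Lemma sliced_exact r0 r1 r2 (d0 : V r1 -> V r0) (d1 : V r2 -> V r1) :
  lhom d0 -> lhom d1 ->
  (forall x, d0 x = lzero (V r0) <-> exists y, d1 y = x) ->
  forall x, sliced d0 x = bzero (W r0) <-> exists y, sliced d1 y = x.
Proof.
move=> d0_hom d1_hom exact01 x; split=> [x0 | [y <-]].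
  apply: sliced_onto => // c; apply/exact01.
  by rewrite -slice_sliced // x0 slice0.
apply: slice_inj => c; rewrite slice0 !slice_sliced //.
by apply/exact01; exists (slice y c).
Qed.

Section SlicedAugmentation.
Variables (r : nat) (e : V r -> trivK K G).
Hypothesis e_hom : lhom e.

Definition sliced_aug (w : W r) : KG :=
  [fsfun c in [fset c | c in slice_dom w] => (e (slice w c) : K) | 0].

Lemma sliced_augE w c : sliced_aug w c = e (slice w c).
Proof.
rewrite fsfun_inE // => cN.
by rewrite slice_notin_dom ?lhom0_trivK //; apply: contra cN; rewrite inE.
Qed.

Lemma sliced_aug_bhom : @bhom K G (W r) (regB K G) sliced_aug.
Proof.
split=> [x y | a x b]; apply/fsfunP => c.
  by rewrite /= kg_addE !sliced_augE sliceD e_hom.1.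
have e_lsum := lhom_lsum _ _ e_hom (lhom0_trivK e_hom).
rewrite /= sliced_augE slice_bact e_lsum lsum_trivKE kg_mulEr.
under eq_bigr => u _ do rewrite e_lsum lsum_trivKE.
rewrite [LHS]exchange_big /=; apply: eq_bigr => v _.
rewrite kg_mulE big_distrl /=; apply: eq_bigr => u _.
by rewrite e_hom.2 /= augm_kg_mono sliced_augE // !mulgA mulrAC.
Qed.

Lemma sliced_aug_onto : (forall k : K, exists x, e x = k) ->
  forall m : KG, exists w, sliced_aug w = m.
Proof.
move=> e_onto m; have [p pP] := choice (fun c x => e x = m c) (fun c => e_onto (m c)).
exists (unslice (finsupp m) p); apply/fsfunP => c.
rewrite sliced_augE slice_unslice; case: ifP => [_|]; first exact: pP.
by rewrite lhom0_trivK // => /negbT; rewrite memNfinsupp => /eqP.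
Qed.

End SlicedAugmentation.

Lemma sliced_aug_exact r0 r1 (e : V r0 -> trivK K G) (d : V r1 -> V r0) :
  lhom e -> lhom d ->
  (forall x, e x = 0 <-> exists y, d y = x) ->
  forall x, sliced_aug e x = kg_zero K G <-> exists y, sliced d y = x.
Proof.
move=> e_hom d_hom exact_ed x; split=> [x0 | [y <-]].
  apply: sliced_onto => // c; apply/exact_ed.
  by rewrite -sliced_augE // x0 kg_zeroE.
apply/fsfunP => c; rewrite sliced_augE // slice_sliced // kg_zeroE.
by apply/exact_ed; exists (slice y c).
Qed.

End BiFP.

Theorem theorem2 (K : comPzRingType) (G : groupType) (n : nat) :
  group_FP K G n -> group_biFP K G n.
Proof.
move=> [r [e [d [e_hom d_hom e_onto exact0 exactS]]]].
exists r, (sliced_aug e), (fun i => sliced (d i)); split.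
- exact: sliced_aug_bhom.
- by move=> i; apply: sliced_bhom.
- exact: sliced_aug_onto.
- by move=> n_gt0; apply: sliced_aug_exact => //; apply: exact0.
- by move=> i lt_i; apply: sliced_exact => //; apply: exactS.
Qed.
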